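(* Let $U$ be an $\mathrm{OST}$-monoid, $V$ a supertropical monoid, and $\alpha:U\to V$ a surjective transmission such that for every $p\in V$ the fiber $\alpha^{-1}(p)$ is convex in $U$. Then $V$, equipped with the total ordering induced by $\alpha$, is an $\mathrm{OST}$-monoid.
   Context: A supertropical monoid is a commutative monoid $(U,\cdot)$ with absorbing element $0$ and distinguished idempotent $e$ with $ex=0\Rightarrow x=0$, together with a total ordering $\le_M$ on $M:=eU$, compatible with multiplication and with $0$ least, making $M$ a bipotent semiring. A transmission $\alpha:U\to V$ is a map with $\alpha(0)=0$, $\alpha(1)=1$, multiplicative, $\alpha(e_U)=e_V$, order-preserving on $eU$. An OST-monoid is a supertropical monoid $U$ with a total ordering $\le$ on $U$ such that: (OST1) $x\le y\Rightarrow xz\le yz$; (OST2) on $M$ the ordering $\le$ coincides with $\le_M$; (OST3) $0\le1\le e$. A subset $C$ of a totally ordered set $X$ is convex if $x,y\in C$, $z\in X$, $x\le z\le y$ imply $z\in C$. If $f:X\to Y$ is a surjection from a totally ordered set with convex fibers, the ordering induced by $f$ is the unique total ordering on $Y$ making $f$ order preserving. *)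

(** A supertropical monoid: commutative monoid (U, *, 1) with absorbing 0,
    distinguished idempotent e with (e x = 0 -> x = 0), and a total ordering
    leM on the ghost ideal M = eU = {x | e x = x}, compatible with
    multiplication and with 0 least (so M, with max as addition, is a
    bipotent semiring). *)
Record STMonoid := {
  st_car :> Type;
  st_mul : st_car -> st_car -> st_car;
  st_one : st_car;
  st_zero : st_car;
  st_e : st_car;
  st_leM : st_car -> st_car -> Prop;
  st_mulA : forall x y z, st_mul x (st_mul y z) = st_mul (st_mul x y) z;
  st_mulC : forall x y, st_mul x y = st_mul y x;
  st_mul1 : forall x, st_mul st_one x = x;
  st_mul0 : forall x, st_mul st_zero x = st_zero;
  st_ee : st_mul st_e st_e = st_e;
  st_e_faithful : forall x, st_mul st_e x = st_zero -> x = st_zero;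
  st_leM_refl : forall x, st_mul st_e x = x -> st_leM x x;
  st_leM_antisym : forall x y, st_mul st_e x = x -> st_mul st_e y = y ->
      st_leM x y -> st_leM y x -> x = y;
  st_leM_trans : forall x y z, st_mul st_e x = x -> st_mul st_e y = y ->
      st_mul st_e z = z -> st_leM x y -> st_leM y z -> st_leM x z;
  st_leM_total : forall x y, st_mul st_e x = x -> st_mul st_e y = y ->
      st_leM x y \/ st_leM y x;
  st_leM_mul : forall x y z, st_mul st_e x = x -> st_mul st_e y = y ->
      st_mul st_e z = z -> st_leM x y -> st_leM (st_mul x z) (st_mul y z);
  st_leM_0 : forall x, st_mul st_e x = x -> st_leM st_zero x
}.

Arguments st_mul {s} _ _.
Arguments st_one {s}.
Arguments st_zero {s}.
Arguments st_e {s}.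
Arguments st_leM {s} _ _.

Definition inM {U : STMonoid} (x : U) : Prop := st_mul st_e x = x.

Definition is_transmission {U V : STMonoid} (a : U -> V) : Prop :=
  a st_zero = st_zero /\ a st_one = st_one /\
  (forall x y, a (st_mul x y) = st_mul (a x) (a y)) /\
  a st_e = st_e /\
  (forall x y, inM x -> inM y -> st_leM x y -> st_leM (a x) (a y)).

Definition is_total_order {T : Type} (le : T -> T -> Prop) : Prop :=
  (forall x, le x x) /\
  (forall x y, le x y -> le y x -> x = y) /\
  (forall x y z, le x y -> le y z -> le x z) /\
  (forall x y, le x y \/ le y x).

Definition is_OST (U : STMonoid) (le : U -> U -> Prop) : Prop :=
  is_total_order le /\
  (forall x y z, le x y -> le (st_mul x z) (st_mul y z)) /\
  (forall x y, inM x -> inM y -> (le x y <-> st_leM x y)) /\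
  le st_zero st_one /\ le st_one st_e.

Definition convex {T : Type} (le : T -> T -> Prop) (C : T -> Prop) : Prop :=
  forall x y z, C x -> C y -> le x z -> le z y -> C z.

Definition order_preserving {X Y : Type} (leX : X -> X -> Prop)
  (leY : Y -> Y -> Prop) (f : X -> Y) : Prop :=
  forall x y, leX x y -> leY (f x) (f y).

(* Convexity of the fibres makes the ordering of U descend to V: two distinct
   fibres lie entirely on one side of each other.  Hence leV (alpha x) (alpha y)
   with alpha x <> alpha y forces x <= y, and each OST axiom for V is the image
   under alpha of the corresponding axiom for U (for OST2 after multiplying the
   representatives by e, which keeps their images in M fixed). *)

From Stdlib Require Import Classical.

Section InducedOrder.

Context {T V : Type}.
Variables (le : T -> T -> Prop) (f : T -> V).
Hypothesis le_total_order : is_total_order le.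
Hypothesis f_surjective : forall p : V, exists x : T, f x = p.
Hypothesis convex_fibers : forall p : V, convex le (fun x => f x = p).

Definition induced_le (p q : V) : Prop :=
  exists x y, f x = p /\ f y = q /\ le x y.

Lemma le_of_distinct_fibers x y x' y' :
  le x y -> f x <> f y -> f x' = f x -> f y' = f y -> le x' y'.
Proof.
  destruct le_total_order as [_ [_ [_ le_total]]].
  intros Hxy Hne Hx' Hy'.
  assert (Hx'y : le x' y).
  { destruct (le_total x' y) as [H | H]; [exact H |].
    exfalso. apply Hne. symmetry. apply (convex_fibers (f x) x x' y); auto. }
  destruct (le_total x' y') as [H | H]; [exact H |].
  exfalso. apply Hne. rewrite <- Hx'.
  apply (convex_fibers (f y) y' y x'); auto.
Qed.

Lemma induced_le_total_order : is_total_order induced_le.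
Proof.
  destruct le_total_order as [le_refl [le_antisym [le_trans le_total]]].
  split; [| split; [| split]].
  - intros p. destruct (f_surjective p) as [x Hx]. exists x, x. auto.
  - intros p q [x [y [Hx [Hy Hxy]]]] [y' [x' [Hy' [Hx' Hyx]]]].
    apply NNPP. intros Hne.
    assert (Hx'y' : le x' y').
    { apply (le_of_distinct_fibers x y); congruence. }
    apply Hne. rewrite <- Hx', <- Hy', (le_antisym x' y'); auto.
  - intros p q r [x [y [Hx [Hy Hxy]]]] [y' [z [Hy' [Hz Hyz]]]].
    destruct (classic (p = q)) as [<- | Hpq].
    { exists y', z. repeat split; congruence. }
    assert (Hxy' : le x y') by (apply (le_of_distinct_fibers x y); congruence).
    exists x, z. eauto.
  - intros p q. destruct (f_surjective p) as [x <-], (f_surjective q) as [y <-].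
    destruct (le_total x y); [left | right]; eexists _, _; eauto.
Qed.

Lemma induced_le_order_preserving : order_preserving le induced_le f.
Proof. intros x y Hxy. exists x, y. auto. Qed.

End InducedOrder.

Lemma order_preserving_reflect {T V : Type} (le : T -> T -> Prop)
  (leV : V -> V -> Prop) (f : T -> V) :
  is_total_order le -> is_total_order leV -> order_preserving le leV f ->
  forall x y, leV (f x) (f y) -> f x = f y \/ le x y.
Proof.
  intros [_ [_ [_ le_total]]] [_ [leV_antisym _]] Hf x y H.
  destruct (le_total x y) as [Hxy | Hyx]; [right; exact Hxy |].
  left. apply leV_antisym; auto.
Qed.

Lemma inM_e_mul (U : STMonoid) (x : U) : inM (st_mul st_e x).
Proof. unfold inM. rewrite st_mulA, st_ee. reflexivity. Qed.

Section DescentOST.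

Context {U V : STMonoid}.
Variables (leU : U -> U -> Prop) (leV : V -> V -> Prop)
  (alpha : U -> V).
Hypothesis U_OST : is_OST U leU.
Hypothesis alpha_transmission : is_transmission alpha.
Hypothesis alpha_surjective : forall p : V, exists x : U, alpha x = p.
Hypothesis leV_total_order : is_total_order leV.
Hypothesis alpha_order_preserving : order_preserving leU leV alpha.

Let alpha_reflect : forall x y, leV (alpha x) (alpha y) -> alpha x = alpha y \/ leU x y.
Proof.
  apply order_preserving_reflect; [apply U_OST | exact leV_total_order |
    exact alpha_order_preserving].
Qed.

Lemma descent_OST1 : forall p q r, leV p q -> leV (st_mul p r) (st_mul q r).
Proof.
  destruct U_OST as [_ [leU_mul _]].
  destruct alpha_transmission as [_ [_ [alpha_mul _]]].
  intros p q r H.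
  destruct (alpha_surjective p) as [x <-], (alpha_surjective q) as [y <-],
    (alpha_surjective r) as [z <-].
  destruct (alpha_reflect x y H) as [-> | Hxy].
  - apply leV_total_order.
  - rewrite <- !alpha_mul. apply alpha_order_preserving, leU_mul, Hxy.
Qed.

Lemma descent_leV_leM p q : inM p -> inM q -> leV p q -> st_leM p q.
Proof.
  destruct U_OST as [_ [leU_mul [leU_leM _]]].
  destruct alpha_transmission as [_ [_ [alpha_mul [alpha_e alpha_leM]]]].
  intros Hp Hq H.
  destruct (classic (p = q)) as [<- | Hne]; [apply st_leM_refl, Hp |].
  destruct (alpha_surjective p) as [x <-], (alpha_surjective q) as [y <-].
  destruct (alpha_reflect x y H) as [E | Hxy]; [contradiction |].
  assert (alpha_ghost : forall z, inM (alpha z) -> alpha (st_mul st_e z) = alpha z).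
  { intros z Hz. rewrite alpha_mul, alpha_e. exact Hz. }
  rewrite <- (alpha_ghost x Hp), <- (alpha_ghost y Hq).
  apply alpha_leM; try apply inM_e_mul.
  apply leU_leM; try apply inM_e_mul.
  rewrite (st_mulC _ st_e x), (st_mulC _ st_e y). apply leU_mul, Hxy.
Qed.

Lemma descent_OST2 : forall p q, inM p -> inM q -> (leV p q <-> st_leM p q).
Proof.
  destruct leV_total_order as [leV_refl [_ [_ leV_total]]].
  intros p q Hp Hq. split; [apply descent_leV_leM; auto |].
  intros H. destruct (leV_total p q) as [H' | H']; [exact H' |].
  rewrite (st_leM_antisym _ p q); auto using descent_leV_leM.
Qed.

Lemma descent_OST3 : leV st_zero st_one /\ leV st_one st_e.
Proof.
  destruct U_OST as [_ [_ [_ [zero_le_one one_le_e]]]].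
  destruct alpha_transmission as [alpha_zero [alpha_one [_ [alpha_e _]]]].
  rewrite <- alpha_zero, <- alpha_one, <- alpha_e.
  split; apply alpha_order_preserving; assumption.
Qed.

Lemma descent_OST : is_OST V leV.
Proof.
  split; [exact leV_total_order |].
  split; [exact descent_OST1 |].
  split; [exact descent_OST2 | exact descent_OST3].
Qed.

End DescentOST.

Theorem theorem61p10 (U V : STMonoid) (leU : U -> U -> Prop)
  (alpha : U -> V) :
  is_OST U leU ->
  is_transmission alpha ->
  (forall p : V, exists x : U, alpha x = p) ->
  (forall p : V, convex leU (fun x => alpha x = p)) ->
  (exists leV : V -> V -> Prop,
      is_total_order leV /\ order_preserving leU leV alpha) /\
  (forall leV : V -> V -> Prop,
      is_total_order leV -> order_preserving leU leV alpha ->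
      is_OST V leV).
Proof.
  intros U_OST alpha_transmission alpha_surjective convex_fibers.
  split.
  - exists (induced_le leU alpha). split.
    + apply induced_le_total_order; [apply U_OST | assumption | assumption].
    + apply induced_le_order_preserving.
  - intros leV leV_total_order alpha_order_preserving.
    apply (descent_OST leU leV alpha); assumption.
Qed.
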